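(* Let $\beta>0$ and let $P,Q,F$ be probability measures on $\mathbb{R}$ with densities $p,q,f$ (or all discrete with probability mass functions on a countable set). Then: (1) $\mathrm{CM}_\beta(P,Q)\ge 0$, and $\mathrm{CM}_\beta(P,Q)=0$ if and only if $p=q$ almost everywhere; (2) $\mathrm{CM}_\beta(P,Q)=\mathrm{CM}_\beta(Q,P)$; (3) $\mathrm{CM}_\beta(P,Q)\le \mathrm{CM}_\beta(P,F)+\mathrm{CM}_\beta(F,Q)$; (4) $0\le \mathrm{CM}_\beta(P,Q)\le 1$; (5) $\lim_{\beta\to 0^+}\mathrm{CM}_\beta(P,Q)=\frac12\int_{\mathbb{R}}|p(x)-q(x)|\,dx=\mathrm{TV}(P,Q)$ (with the sum in the discrete case); (6) if $P_n,Q_n$ have densities (resp. mass functions) $p_n,q_n$ with $p_n\to p$ and $q_n\to q$ in total variation (i.e. $\int|p_n-p|\to0$ and $\int|q_n-q|\to0$, resp. sums), then $\mathrm{CM}_\beta(P_n,Q_n)\to \mathrm{CM}_\beta(P,Q)$.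
   Context: For probability measures $P,Q$ with densities $p,q$ and $\beta>0$, the complex metric is $\mathrm{CM}_\beta(P,Q)=\frac12\int_{\mathbb{R}}\left|p(x)e^{i\beta p(x)}-q(x)e^{i\beta q(x)}\right|dx$; in the discrete case with probability mass functions $p,q$ on a countable set it is $\frac12\sum_x\left|p(x)e^{i\beta p(x)}-q(x)e^{i\beta q(x)}\right|$. $\mathrm{TV}(P,Q)=\frac12\int|p-q|$ denotes the total variation distance. *)

From HB Require Import structures.
From mathcomp Require Import all_boot all_order all_algebra.
From mathcomp Require Import all_classical all_reals all_analysis.
From mathcomp Require Import complex.
Set Implicit Arguments. Unset Strict Implicit. Unset Printing Implicit Defensive.
Import Order.TTheory GRing.Theory Num.Theory.
Import numFieldNormedType.Exports.
Local Open Scope classical_set_scope.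
Local Open Scope ring_scope.

Section CM.
Variable R : realType.

Definition cmul_expi (a t : R) : complex.complex R :=
  complex.Complex (a * cos t) (a * sin t).

Definition cm_integrand (beta a b : R) : R :=
  complex.ComplexField.Normc.normc (cmul_expi a (beta * a) - cmul_expi b (beta * b))%R.

Definition is_density (p : R -> R) : Prop :=
  measurable_fun [set: R] p /\ (forall x, 0 <= p x) /\
  (\int[lebesgue_measure]_x (p x)%:E = 1)%E.

Definition CM (beta : R) (p q : R -> R) : \bar R :=
  ((2^-1)%:E * \int[lebesgue_measure]_x (cm_integrand beta (p x) (q x))%:E)%E.

Definition TV (p q : R -> R) : \bar R :=
  ((2^-1)%:E * \int[lebesgue_measure]_x (`|p x - q x|)%:E)%E.

Definition is_pmf (T : countType) (p : T -> R) : Prop :=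
  (forall x, 0 <= p x) /\ (\esum_(x in [set: T]) (p x)%:E = 1)%E.

Definition CMd (T : countType) (beta : R) (p q : T -> R) : \bar R :=
  ((2^-1)%:E * \esum_(x in [set: T]) (cm_integrand beta (p x) (q x))%:E)%E.

Definition TVd (T : countType) (p q : T -> R) : \bar R :=
  ((2^-1)%:E * \esum_(x in [set: T]) (`|p x - q x|)%:E)%E.

End CM.

From HB Require Import structures.
From mathcomp Require Import all_boot all_order all_algebra.
From mathcomp Require Import all_classical all_reals all_analysis.
From mathcomp Require Import measurable_realfun complex ring lra.
Set Implicit Arguments. Unset Strict Implicit. Unset Printing Implicit Defensive.
Import Order.TTheory GRing.Theory Num.Theory.
Import numFieldNormedType.Exports.
Import complex.ComplexField.Normc.
Local Open Scope classical_set_scope.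
Local Open Scope ring_scope.

(* Writing phi_beta a := a e^{i beta a}, CM_beta is half the L^1 distance between
   phi_beta o p and phi_beta o q, so (1)-(4) are pointwise facts about the
   pseudometric |phi_beta a - phi_beta b| on [0, +oo), which separates points and
   is at most a + b.  For (5) and (6) the key estimate is
   |e^{is} - e^{it}| <= min(2, |s - t|): splitting at a level K gives
   a |e^{is} - e^{it}| <= 2 K |s - t| + 4 (a - K)^+, and by dominated convergence
   the tail integral of (p - K)^+ is small for K large.  Hence CM_beta(., p) is
   small on a small L^1-ball around p, and |phi_beta a - phi_beta b| - |a - b| is
   O(beta) up to tails.  A pmf on a countable type is pulled back along [pickle]
   to a density for the counting measure on nat. *)

Section complex_phase.
Variable R : realType.
Implicit Types a b c s t x y K beta : R.
Implicit Types z w : R[i].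

Definition expi t : R[i] := Complex (cos t) (sin t).

Lemma cmul_expiE a t : cmul_expi a t = a%:C%C * expi t.
Proof. by rewrite /cmul_expi /expi /=; simpc. Qed.

Lemma expi0 : expi 0 = 1.
Proof. by rewrite /expi cos0 sin0. Qed.

Lemma normc_ge0 z : 0 <= normc z.
Proof. by case: z => u v; exact: sqrtr_ge0. Qed.

Lemma normc_scale a z : normc (a%:C%C * z) = `|a| * normc z.
Proof. by rewrite normcM /= expr0n addr0 sqrtr_sqr. Qed.

Lemma normc_expi t : normc (expi t) = 1.
Proof. by rewrite /= cos2Dsin2 sqrtr1. Qed.

Lemma normc_distC z w : normc (z - w) = normc (w - z).
Proof. by rewrite -opprB normcN. Qed.

Lemma normc_lerB_dist z w : `|normc z - normc w| <= normc (z - w).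
Proof.
rewrite ler_norml; apply/andP; split.
  have := le_normcD (w - z) z; rewrite subrK normc_distC; lra.
have := le_normcD (z - w) w; rewrite subrK; lra.
Qed.

Lemma normr_sin_le x : `|sin x| <= `|x|.
Proof.
have sin_lip y : 0 <= y -> `|sin y| <= y.
  move=> y0; have [c _] := @MVT_segment R sin cos 0 y y0
    (fun u _ => is_derive_sin u) (continuous_subspaceT (@continuous_sin R)).
  by rewrite sin0 !subr0 => ->; rewrite normrM (ger0_norm y0) ler_piMl ?cos_max.
have [x0|x0] := leP 0 x; first by rewrite (ger0_norm x0) sin_lip.
by rewrite -normrN -sinN (ltr0_norm x0) sin_lip // oppr_ge0 ltW.
Qed.

(* |e^{is} - e^{it}|^2 = 2 - 2 cos (s - t) = 4 sin^2 ((s - t) / 2) *)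
Lemma normc_expiB_le s t : normc (expi s - expi t) <= `|s - t|.
Proof.
rewrite /= -sqrtr_sqr ler_sqrt ?sqr_ge0 //.
have -> : (cos s - cos t) ^+ 2 + (sin s - sin t) ^+ 2 = 2 - 2 * cos (s - t).
  rewrite cosB; transitivity ((cos s ^+ 2 + sin s ^+ 2) + (cos t ^+ 2 + sin t ^+ 2)
     - 2 * (cos s * cos t + sin s * sin t)); first ring.
  by rewrite !cos2Dsin2.
pose u := (s - t) / 2.
have -> : s - t = u *+ 2 by rewrite /u -mulr_natr divfK ?pnatr_eq0.
rewrite cos_mulr2n cos2sin2.
have : sin u ^+ 2 <= u ^+ 2.
  rewrite -(real_normK (num_real (sin u))) -(real_normK (num_real u)).
  by rewrite ler_pXn2r ?nnegrE ?normr_ge0 // normr_sin_le.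
rewrite !mulr2n; nra.
Qed.

Lemma normc_expiB_le2 s t : normc (expi s - expi t) <= 2.
Proof. by apply: (le_trans (le_normcD _ _)); rewrite normcN !normc_expi. Qed.

Lemma mul_normc_expiB_le a K s t : 0 <= a -> 0 <= K ->
  a * normc (expi s - expi t) <= 2 * K * `|s - t| + 4 * Num.max (a - K) 0.
Proof.
move=> a0 K0; have gap0 := normc_ge0 (expi s - expi t).
have gap_le2 := normc_expiB_le2 s t; have gap_lip := normc_expiB_le s t.
have excess_ge : a - K <= Num.max (a - K) 0 by rewrite le_max lexx.
have excess_ge0 : 0 <= Num.max (a - K) 0 by rewrite le_max lexx orbT.
have [aK|aK] := leP a (2 * K); last nra.
have : a * normc (expi s - expi t) <= a * `|s - t| by rewrite ler_wpM2l.
have : a * `|s - t| <= 2 * K * `|s - t| by rewrite ler_wpM2r.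
lra.
Qed.

Lemma cm_integrand_ge0 beta a b : 0 <= cm_integrand beta a b.
Proof. exact: normc_ge0. Qed.

Lemma cm_integrandC beta a b : cm_integrand beta a b = cm_integrand beta b a.
Proof. exact: normc_distC. Qed.

Lemma cm_integrandii beta a : cm_integrand beta a a = 0.
Proof. by rewrite /cm_integrand subrr normc0. Qed.

Lemma cm_integrand_triangle beta a b c :
  cm_integrand beta a c <= cm_integrand beta a b + cm_integrand beta b c.
Proof.
rewrite /cm_integrand.
set x := cmul_expi a _; set y := cmul_expi b _; set z := cmul_expi c _.
have -> : x - z = (x - y) + (y - z) by rewrite addrA subrK.
exact: le_normcD.
Qed.

Lemma cm_integrand_le_add beta a b : 0 <= a -> 0 <= b ->
  cm_integrand beta a b <= a + b.
Proof.
move=> a0 b0; apply: (le_trans (le_normcD _ _)).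
by rewrite normcN !cmul_expiE !normc_scale !normc_expi !mulr1 !ger0_norm.
Qed.

Lemma cm_integrand_eq0 beta a b : 0 <= a -> 0 <= b ->
  cm_integrand beta a b = 0 -> a = b.
Proof.
move=> a0 b0 /eq0_normc /eqP; rewrite subr_eq0 => /eqP /(congr1 (@normc R)).
by rewrite !cmul_expiE !normc_scale !normc_expi !mulr1 !ger0_norm.
Qed.

Lemma cm_integrand_le_trunc beta K a' a : 0 <= beta -> 0 <= K -> 0 <= a ->
  cm_integrand beta a' a <= (1 + 2 * K * beta) * `|a' - a| + 4 * Num.max (a - K) 0.
Proof.
move=> b0 K0 a0; rewrite /cm_integrand !cmul_expiE.
have -> : a'%:C%C * expi (beta * a') - a%:C%C * expi (beta * a) =
    (a' - a)%:C%C * expi (beta * a') + a%:C%C * (expi (beta * a') - expi (beta * a)).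
  by rewrite rmorphB /=; ring.
apply: (le_trans (le_normcD _ _)); rewrite !normc_scale normc_expi (ger0_norm a0).
have := mul_normc_expiB_le (beta * a') (beta * a) a0 K0.
by rewrite -mulrBr normrM (ger0_norm b0); lra.
Qed.

Definition phase_gap beta a := a * normc (expi (beta * a) - 1).

Lemma phase_gap_ge0 beta a : 0 <= a -> 0 <= phase_gap beta a.
Proof. by move=> a0; rewrite mulr_ge0 ?normc_ge0. Qed.

Lemma phase_gap_le beta K a : 0 <= beta -> 0 <= K -> 0 <= a ->
  phase_gap beta a <= 2 * K * beta * a + 4 * Num.max (a - K) 0.
Proof.
move=> b0 K0 a0; have := mul_normc_expiB_le (beta * a) 0 a0 K0.
by rewrite expi0 subr0 ger0_norm ?mulr_ge0 // mulrA.
Qed.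

Lemma cm_integrand_dist_le beta a b : 0 <= a -> 0 <= b ->
  `|cm_integrand beta a b - `|a - b| | <= phase_gap beta a + phase_gap beta b.
Proof.
move=> a0 b0; rewrite /cm_integrand !cmul_expiE.
have -> : `|a - b| = normc (a - b)%:C%C by rewrite -[_%:C%C]mulr1 normc_scale normc1 mulr1.
apply: (le_trans (normc_lerB_dist _ _)).
have -> : a%:C%C * expi (beta * a) - b%:C%C * expi (beta * b) - (a - b)%:C%C =
    a%:C%C * (expi (beta * a) - 1) - b%:C%C * (expi (beta * b) - 1).
  by rewrite rmorphB /=; ring.
apply: (le_trans (le_normcD _ _)).
by rewrite normcN !normc_scale !ger0_norm.
Qed.

End complex_phase.

Section integral_metric.
Context d (T : measurableType d) (R : realType) (mu : {measure set T -> \bar R}).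
Implicit Types (p q g h u v : T -> R) (beta : R).
Local Open Scope ereal_scope.

Definition is_density_wrt p := measurable_fun [set: T] p /\ (forall x, 0 <= p x)%R /\
  \int[mu]_x (p x)%:E = 1.

Definition cm_wrt beta p q := (2^-1)%:E * \int[mu]_x (cm_integrand beta (p x) (q x))%:E.

Definition tv_wrt p q := (2^-1)%:E * \int[mu]_x (`|p x - q x|)%:E.

Lemma measurable_normc (f : T -> R[i]) :
  measurable_fun [set: T] (fun x => complex.Re (f x)) ->
  measurable_fun [set: T] (fun x => complex.Im (f x)) ->
  measurable_fun [set: T] (fun x => normc (f x)).
Proof.
move=> mRe mIm.
have -> : (fun x => normc (f x)) =
    (fun x => Num.sqrt (complex.Re (f x) ^+ 2 + complex.Im (f x) ^+ 2))%R.
  by apply/funext => x; case: (f x).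
apply: measurableT_comp.
  by apply: continuous_measurable_fun; exact: sqrt_continuous.
by apply: measurable_funD; exact: measurable_funX.
Qed.

Lemma measurable_cos_sin_comp (f : T -> R) : measurable_fun [set: T] f ->
  measurable_fun [set: T] (fun x => cos (f x)) /\ measurable_fun [set: T] (fun x => sin (f x)).
Proof.
move=> mf; split; apply: measurableT_comp => //; apply: continuous_measurable_fun.
  exact: continuous_cos.
exact: continuous_sin.
Qed.

Lemma measurable_cm_integrand beta p q :
  measurable_fun [set: T] p -> measurable_fun [set: T] q ->
  measurable_fun [set: T] (fun x => cm_integrand beta (p x) (q x)).
Proof.
move=> mp mq.
have [cp sp] := measurable_cos_sin_comp (measurable_funM (measurable_cst beta) mp).
have [cq sq] := measurable_cos_sin_comp (measurable_funM (measurable_cst beta) mq).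
by apply: measurable_normc => /=; apply: measurable_funB; exact: measurable_funM.
Qed.

Lemma measurable_phase_gap beta p : measurable_fun [set: T] p ->
  measurable_fun [set: T] (fun x => phase_gap beta (p x)).
Proof.
move=> mp; have [cp sp] := measurable_cos_sin_comp (measurable_funM (measurable_cst beta) mp).
apply: measurable_funM => //; apply: measurable_normc => /=.
  by apply: measurable_funB => //; exact: measurable_cst.
by rewrite /=; under eq_fun do rewrite subr0.
Qed.

Lemma measurable_excess K g : measurable_fun [set: T] g ->
  measurable_fun [set: T] (fun x => Num.max (g x - K) 0)%R.
Proof.
move=> mg; apply: measurable_maxr; last exact: measurable_cst.
by apply: measurable_funB => //; exact: measurable_cst.
Qed.

Lemma measurable_EFin_comp g : measurable_fun [set: T] g ->
  measurable_fun [set: T] (fun x => (g x)%:E).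
Proof. by move=> mg; apply/measurable_EFinP. Qed.

Lemma integral_nneg_ge0 g : (forall x, 0 <= g x)%R -> 0 <= \int[mu]_x (g x)%:E.
Proof. by move=> g0; apply: integral_ge0 => x _; rewrite lee_fin. Qed.

Lemma le_integral_nneg g h : measurable_fun [set: T] g -> measurable_fun [set: T] h ->
  (forall x, 0 <= g x)%R -> (forall x, g x <= h x)%R ->
  \int[mu]_x (g x)%:E <= \int[mu]_x (h x)%:E.
Proof.
move=> mg mh g0 gh; apply: ge0_le_integral => //; try exact: measurable_EFin_comp.
  by move=> x _; rewrite lee_fin.
by move=> x _; rewrite lee_fin.
Qed.

Lemma integral_nnegD u v : measurable_fun [set: T] u -> measurable_fun [set: T] v ->
  (forall x, 0 <= u x)%R -> (forall x, 0 <= v x)%R ->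
  \int[mu]_x ((u x + v x)%R)%:E = \int[mu]_x (u x)%:E + \int[mu]_x (v x)%:E.
Proof.
move=> mu_ mv u0 v0; under eq_integral do rewrite EFinD.
by apply: ge0_integralD; rewrite //; try exact: measurable_EFin_comp;
  move=> x _; rewrite lee_fin.
Qed.

Lemma integral_nnegZl (a : R) u : (0 <= a)%R -> measurable_fun [set: T] u ->
  (forall x, 0 <= u x)%R -> \int[mu]_x ((a * u x)%R)%:E = a%:E * \int[mu]_x (u x)%:E.
Proof.
move=> a0 mu_ u0; under eq_integral do rewrite EFinM.
by apply: ge0_integralZl_EFin; rewrite //; try exact: measurable_EFin_comp;
  move=> x _; rewrite lee_fin.
Qed.

Lemma le_integral_comb (a b : R) g u v : (0 <= a)%R -> (0 <= b)%R ->
  measurable_fun [set: T] g -> measurable_fun [set: T] u -> measurable_fun [set: T] v ->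
  (forall x, 0 <= g x)%R -> (forall x, 0 <= u x)%R -> (forall x, 0 <= v x)%R ->
  (forall x, g x <= a * u x + b * v x)%R ->
  \int[mu]_x (g x)%:E <= a%:E * \int[mu]_x (u x)%:E + b%:E * \int[mu]_x (v x)%:E.
Proof.
move=> a0 b0 mg mu_ mv g0 u0 v0 guv.
have [mau mbv] := (measurable_funM (measurable_cst a) mu_, measurable_funM (measurable_cst b) mv).
rewrite -!integral_nnegZl // -integral_nnegD //; first last.
- by move=> x; rewrite mulr_ge0.
- by move=> x; rewrite mulr_ge0.
by apply: le_integral_nneg => //; exact: measurable_funD.
Qed.

Lemma integral_cm_le2 beta p q : is_density_wrt p -> is_density_wrt q ->
  \int[mu]_x (cm_integrand beta (p x) (q x))%:E <= 2%:E.
Proof.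
move=> [mp [p0 ip]] [mq [q0 iq]].
apply: (@le_trans _ _ (\int[mu]_x ((p x + q x)%R)%:E)).
  apply: le_integral_nneg; first exact: measurable_cm_integrand.
  - exact: measurable_funD.
  - by move=> x; exact: cm_integrand_ge0.
  by move=> x; rewrite cm_integrand_le_add.
by rewrite integral_nnegD // ip iq.
Qed.

Lemma integral_cm_fin_num beta p q : is_density_wrt p -> is_density_wrt q ->
  \int[mu]_x (cm_integrand beta (p x) (q x))%:E \is a fin_num.
Proof.
move=> dp dq; rewrite ge0_fin_numE; last exact: integral_nneg_ge0 (fun x => cm_integrand_ge0 _ _ _).
exact: le_lt_trans (integral_cm_le2 beta dp dq) (ltry _).
Qed.

Lemma cm_wrt_ge0 beta p q : 0 <= cm_wrt beta p q.
Proof. by rewrite mule_ge0 ?lee_fin // integral_nneg_ge0 // => x; exact: cm_integrand_ge0. Qed.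

Lemma cm_wrtC beta p q : cm_wrt beta p q = cm_wrt beta q p.
Proof. by rewrite /cm_wrt; under eq_integral do rewrite cm_integrandC. Qed.

Lemma cm_wrt_triangle beta p q f : is_density_wrt p -> is_density_wrt q ->
  is_density_wrt f -> cm_wrt beta p q <= cm_wrt beta p f + cm_wrt beta f q.
Proof.
move=> [mp _] [mq _] [mf _].
rewrite /cm_wrt -ge0_muleDr; try exact: integral_nneg_ge0 (fun x => cm_integrand_ge0 _ _ _).
rewrite lee_wpmul2l ?lee_fin //.
rewrite -integral_nnegD; try exact: measurable_cm_integrand;
  try by move=> x; exact: cm_integrand_ge0.
apply: le_integral_nneg; try exact: measurable_cm_integrand.
- by apply: measurable_funD; exact: measurable_cm_integrand.
- by move=> x; exact: cm_integrand_ge0.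
by move=> x; exact: cm_integrand_triangle.
Qed.

Lemma cm_wrt_le1 beta p q : is_density_wrt p -> is_density_wrt q -> cm_wrt beta p q <= 1.
Proof.
move=> dp dq; rewrite /cm_wrt.
apply: (le_trans (lee_wpmul2l _ (integral_cm_le2 beta dp dq))); first by rewrite lee_fin.
by rewrite -EFinM mulVf.
Qed.

Lemma cm_wrt_eq0 beta p q : is_density_wrt p -> is_density_wrt q ->
  cm_wrt beta p q = 0 <-> {ae mu, forall x, p x = q x}.
Proof.
move=> [mp [p0 _]] [mq [q0 _]].
have mc := measurable_EFin_comp (measurable_cm_integrand beta mp mq).
split.
  move=> /eqP; rewrite /cm_wrt mule_eq0 eqe invr_eq0 pnatr_eq0 /= => /eqP.
  under eq_integral => x _ do
    rewrite -(@gee0_abs _ (cm_integrand beta (p x) (q x))%:E) ?lee_fin ?cm_integrand_ge0 //.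
  move=> /(ae_eq_integral_abs mu measurableT mc); apply: filterS => x /= h.
  exact: (cm_integrand_eq0 (p0 x) (q0 x) (congr1 fine (h I))).
move=> pq; rewrite /cm_wrt (ae_eq_integral (cst 0)) ?integral0 ?mule0 //.
by apply: filterS pq => x /= -> _; rewrite cm_integrandii.
Qed.

End integral_metric.

Lemma near_le_of_cvge0 (R : realType) {I : Type} {F : set_system I} {FF : Filter F}
    (w : I -> \bar R) (e : R) :
  (0 < e)%R -> w i @[i --> F] --> 0%E -> \forall i \near F, (w i <= e%:E)%E.
Proof.
move=> e0 cw; apply: (cw [set y | y <= e%:E]%E); apply/nbhs_EFin.
by apply: filterS (lt_le_nbhsl e0) => x /=; rewrite lee_fin.
Qed.

Section cm_continuity.
Context d (T : measurableType d) (R : realType) (mu : {measure set T -> \bar R}).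
Implicit Types (p q g h err : T -> R) (beta e : R).
Local Open Scope ereal_scope.

Lemma integral_excess_small g : measurable_fun [set: T] g -> (forall x, 0 <= g x)%R ->
  \int[mu]_x (g x)%:E < +oo -> forall e, (0 < e)%R ->
  exists2 K, (0 <= K)%R & \int[mu]_x (Num.max (g x - K) 0)%:E <= e%:E.
Proof.
move=> mg g0 ig e e0.
pose f_ n x := (Num.max (g x - n%:R) 0)%:E.
have f_cvg : {ae mu, forall x, [set: T] x -> f_ ^~ x @ \oo --> (cst 0 : T -> \bar R) x}.
  apply: aeW => x _; apply: cvg_near_cst.
  apply: filterS (nbhs_infty_ger (g x)) => n gn.
  by rewrite /f_; congr EFin; apply/max_idPr; rewrite subr_le0.
have g_int : mu.-integrable [set: T] (fun x => (g x)%:E).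
  apply/integrableP; split; first exact: measurable_EFin_comp.
  by under eq_integral do rewrite gee0_abs ?lee_fin //.
have f_dom : {ae mu, forall x n, [set: T] x -> `|f_ n x| <= (g x)%:E}.
  apply: aeW => x n _; rewrite /f_ gee0_abs ?lee_fin ?le_max ?lexx ?orbT //.
  by rewrite ge_max g0 andbT lerBlDr lerDl.
have [_ _] := dominated_convergence measurableT
  (fun n => measurable_EFin_comp (measurable_excess n%:R mg)) (measurable_cst _)
  f_cvg g_int f_dom.
rewrite integral0 => /(near_le_of_cvge0 e0) [N _ fN].
by exists N%:R => //; exact: (fN N (leqnn N)).
Qed.

Lemma integral_dist_le g h err e :
  measurable_fun [set: T] g -> measurable_fun [set: T] h -> measurable_fun [set: T] err ->
  (forall x, 0 <= g x)%R -> (forall x, 0 <= h x)%R ->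
  (forall x, g x <= h x + err x)%R -> (forall x, h x <= g x + err x)%R ->
  \int[mu]_x (g x)%:E \is a fin_num -> \int[mu]_x (h x)%:E \is a fin_num ->
  \int[mu]_x (err x)%:E <= e%:E ->
  (`|fine (\int[mu]_x (h x)%:E) - fine (\int[mu]_x (g x)%:E)| <= e)%R.
Proof.
move=> mg mh merr g0 h0 ghe hge fg fh ie.
have err0 x : (0 <= err x)%R by have := ghe x; have := hge x; lra.
have le_shift (u v : T -> R) : measurable_fun [set: T] u -> (forall x, 0 <= u x)%R ->
    (forall x, u x <= v x + err x)%R -> measurable_fun [set: T] v ->
    (forall x, 0 <= v x)%R ->
    \int[mu]_x (u x)%:E <= \int[mu]_x (v x)%:E + e%:E.
  move=> mu_ u0 uve mv v0; apply: le_trans (leeD2l _ ie).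
  rewrite -integral_nnegD //.
  by apply: le_integral_nneg => //; exact: measurable_funD.
have := le_shift _ _ mg g0 ghe mh h0; have := le_shift _ _ mh h0 hge mg g0.
rewrite -(fineK fg) -(fineK fh) -!EFinD !lee_fin ler_norml; lra.
Qed.

Lemma near_integral_cm_le beta p (pn : nat -> T -> R) e : (0 < beta)%R -> (0 < e)%R ->
  is_density_wrt mu p -> (forall n, measurable_fun [set: T] (pn n)) ->
  \int[mu]_x (`|pn n x - p x|)%:E @[n --> \oo] --> 0 ->
  \forall n \near \oo, \int[mu]_x (cm_integrand beta (pn n x) (p x))%:E <= e%:E.
Proof.
move=> b0 e0 [mp [p0 ip]] mpn cvg_pn.
have [K K0 excessK] : exists2 K, (0 <= K)%R &
    \int[mu]_x (Num.max (p x - K) 0)%:E <= (e / 8)%:E.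
  by apply: integral_excess_small; rewrite ?ip ?ltry ?divr_gt0.
pose c := (1 + 2 * K * beta)%R.
have c0 : (0 < c)%R by rewrite ltr_pwDl // !mulr_ge0 // ltW.
have e2c : (0 < e / (2 * c))%R by rewrite divr_gt0 ?mulr_gt0.
apply: filterS (near_le_of_cvge0 e2c cvg_pn) => n L1_small.
have mdist : measurable_fun [set: T] (fun x => `|pn n x - p x|)%R.
  by apply: measurableT_comp => //; exact: measurable_funB.
have mexc := measurable_excess K mp.
have exc0 x : (0 <= Num.max (p x - K) 0)%R by rewrite le_max lexx orbT.
apply: le_trans (le_integral_comb mu (b := 4) (ltW c0) _ _ mdist mexc _ _ exc0 _) _ => //.
- exact: measurable_cm_integrand.
- by move=> x; exact: cm_integrand_ge0.
- by move=> x; exact: cm_integrand_le_trunc (ltW b0) K0 (p0 x).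
apply: le_trans (leeD (lee_wpmul2l _ L1_small) (lee_wpmul2l _ excessK)) _;
  rewrite ?lee_fin ?(ltW c0) //.
have -> : (c * (e / (2 * c)) = e / 2)%R by field; rewrite gt_eqF.
lra.
Qed.

Lemma near_integral_phase_gap_le p e : (0 < e)%R -> is_density_wrt mu p ->
  \forall b \near 0^'+, \int[mu]_x (phase_gap b (p x))%:E <= e%:E.
Proof.
move=> e0 [mp [p0 ip]].
have [K K0 excessK] : exists2 K, (0 <= K)%R &
    \int[mu]_x (Num.max (p x - K) 0)%:E <= (e / 8)%:E.
  by apply: integral_excess_small; rewrite ?ip ?ltry ?divr_gt0.
have K1 : (0 < K + 1)%R by rewrite ltr_pwDr.
have mexc := measurable_excess K mp.
have exc0 x : (0 <= Num.max (p x - K) 0)%R by rewrite le_max lexx orbT.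
near=> b.
have b0 : (0 <= b)%R by near: b; exact: nbhs_right_ge.
have Kb : (2 * K * b <= e / 2)%R.
  have : (b <= e / (4 * (K + 1)))%R.
    by near: b; apply: nbhs_right_le; rewrite !divr_gt0 ?mulr_gt0.
  rewrite ler_pdivlMr ?mulr_gt0 //; nra.
apply: le_trans (le_integral_comb mu (a := 2 * K * b) (b := 4) _ _ _ mp mexc _ p0 exc0 _) _ => //.
- by rewrite !mulr_ge0.
- exact: measurable_phase_gap.
- by move=> x; exact: phase_gap_ge0.
- by move=> x; exact: phase_gap_le.
rewrite ip mule1; apply: le_trans (leeD (lexx _) (lee_wpmul2l _ excessK)) _;
  rewrite ?lee_fin //.
lra.
Unshelve. all: by end_near.
Qed.

Lemma cvg_cm_wrt beta p q (pn qn : nat -> T -> R) : (0 < beta)%R ->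
  is_density_wrt mu p -> is_density_wrt mu q ->
  (forall n, is_density_wrt mu (pn n)) -> (forall n, is_density_wrt mu (qn n)) ->
  \int[mu]_x (`|pn n x - p x|)%:E @[n --> \oo] --> 0 ->
  \int[mu]_x (`|qn n x - q x|)%:E @[n --> \oo] --> 0 ->
  cm_wrt mu beta (pn n) (qn n) @[n --> \oo] --> cm_wrt mu beta p q.
Proof.
move=> b0 dp dq dpn dqn cvg_pn cvg_qn; apply: cvgeZl => //.
rewrite -(fineK (integral_cm_fin_num beta dp dq)).
apply: cvg_EFin; first by apply: nearW => n; exact: integral_cm_fin_num.
apply/cvgrPdist_le => e e0.
have e2 : (0 < e / 2)%R by rewrite divr_gt0.
have near_p := near_integral_cm_le b0 e2 dp (fun n => (dpn n).1) cvg_pn.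
have near_q := near_integral_cm_le b0 e2 dq (fun n => (dqn n).1) cvg_qn.
near=> n.
have [[mp _] [mq _]] := (dp, dq).
have [[mpn _] [mqn _]] := (dpn n, dqn n).
apply: (integral_dist_le (err := fun x => cm_integrand beta (pn n x) (p x) +
    cm_integrand beta (qn n x) (q x))%R); try exact: integral_cm_fin_num;
  try exact: measurable_cm_integrand; try by move=> x; exact: cm_integrand_ge0.
- by apply: measurable_funD; exact: measurable_cm_integrand.
- move=> x; have := cm_integrand_triangle beta (pn n x) (p x) (qn n x).
  have := cm_integrand_triangle beta (p x) (q x) (qn n x).
  rewrite (cm_integrandC beta (q x) (qn n x)); lra.
- move=> x; have := cm_integrand_triangle beta (p x) (pn n x) (q x).
  have := cm_integrand_triangle beta (pn n x) (qn n x) (q x).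
  rewrite (cm_integrandC beta (p x) (pn n x)); lra.
rewrite integral_nnegD; try exact: measurable_cm_integrand;
  try by move=> x; exact: cm_integrand_ge0.
rewrite [e in e%:E]splitr EFinD.
by apply: leeD; near: n.
Unshelve. all: by end_near.
Qed.

Lemma cm_wrt_cvg_tv p q : is_density_wrt mu p -> is_density_wrt mu q ->
  cm_wrt mu b p q @[b --> 0^'+] --> tv_wrt mu p q.
Proof.
move=> dp dq; apply: cvgeZl => //.
have [[mp [p0 ip]] [mq [q0 iq]]] := (dp, dq).
have mdist : measurable_fun [set: T] (fun x => `|p x - q x|)%R.
  by apply: measurableT_comp => //; exact: measurable_funB.
have tv_fin : \int[mu]_x (`|p x - q x|)%:E \is a fin_num.
  rewrite ge0_fin_numE ?integral_nneg_ge0 //.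
  apply: le_lt_trans (ltry 2%R).
  have <- : \int[mu]_x ((p x + q x)%R)%:E = 2%:E by rewrite integral_nnegD // ip iq.
  apply: le_integral_nneg => //; first exact: measurable_funD.
  by move=> x; rewrite (le_trans (ler_normB _ _)) // !ger0_norm.
rewrite -(fineK tv_fin); apply: cvg_EFin.
  by apply: nearW => b; exact: integral_cm_fin_num.
apply/cvgrPdist_le => e e0.
have e2 : (0 < e / 2)%R by rewrite divr_gt0.
have near_p := near_integral_phase_gap_le e2 dp.
have near_q := near_integral_phase_gap_le e2 dq.
near=> b.
apply: (integral_dist_le (err := fun x => phase_gap b (p x) + phase_gap b (q x))%R);
  rewrite //; try exact: integral_cm_fin_num; try exact: measurable_cm_integrand.
- by apply: measurable_funD; exact: measurable_phase_gap.
- by move=> x; exact: cm_integrand_ge0.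
- by move=> x; have := cm_integrand_dist_le b (p0 x) (q0 x); rewrite ler_norml; lra.
- by move=> x; have := cm_integrand_dist_le b (p0 x) (q0 x); rewrite ler_norml; lra.
rewrite integral_nnegD; try exact: measurable_phase_gap;
  try by move=> x; exact: phase_gap_ge0.
rewrite [e in e%:E]splitr EFinD.
by apply: leeD; near: b.
Unshelve. all: by end_near.
Qed.

End cm_continuity.

Section pmf_on_nat.
Context (R : realType) (T : countType).
Implicit Types (p q : T -> R) (beta : R).
Local Open Scope ereal_scope.

Definition pmf_on_nat (h : T -> R) (n : nat) : R := oapp h 0%R (pickle_inv n).

Lemma pmf_on_nat_ge0 (h : T -> R) : (forall x, 0 <= h x)%R ->
  forall n, (0 <= pmf_on_nat h n)%R.
Proof. by move=> h0 n; rewrite /pmf_on_nat; case: pickle_inv. Qed.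

Lemma esum_pmf_on_nat (h : T -> R) : (forall x, 0 <= h x)%R ->
  \esum_(x in [set: T]) (h x)%:E = \int[counting]_n (pmf_on_nat h n)%:E.
Proof.
move=> h0; have h0' n : 0 <= (pmf_on_nat h n)%:E by rewrite lee_fin pmf_on_nat_ge0.
rewrite ge0_integral_count // nneseries_esumT //.
transitivity (\esum_(x in [set: T]) (pmf_on_nat h (pickle x))%:E).
  by apply: eq_esum => x _; rewrite /pmf_on_nat pickleK_inv.
rewrite -(esum_image _ _ (fun n => (pmf_on_nat h n)%:E)); last first.
  by move=> x y _ _; exact: (pcan_inj (@pickleK_inv T)).
rewrite esum_mkcond; apply: eq_esum => n _; case: ifPn => //; rewrite notin_setE.
rewrite /pmf_on_nat; case E: (pickle_inv n) => [x|] //= nx.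
by exfalso; apply: nx; exists x => //; have := @pickle_invK T n; rewrite E.
Qed.

Lemma pmf_on_nat_density p : is_pmf p -> is_density_wrt counting (pmf_on_nat p).
Proof.
move=> [p0 sp]; split=> [_ Y _|]; first by [].
by split; [exact: pmf_on_nat_ge0|rewrite -esum_pmf_on_nat].
Qed.

Lemma esum_pmf_on_nat2 (h : R -> R -> R) p q : (forall a b, 0 <= h a b)%R ->
  h 0%R 0%R = 0%R ->
  \esum_(x in [set: T]) (h (p x) (q x))%:E =
  \int[counting]_n (h (pmf_on_nat p n) (pmf_on_nat q n))%:E.
Proof.
move=> h0 h00; rewrite (esum_pmf_on_nat (h := fun x => h (p x) (q x))) //.
by apply: eq_integral => n _; rewrite /pmf_on_nat; case: pickle_inv => //=; rewrite h00.
Qed.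

Lemma CMd_counting beta p q :
  CMd beta p q = cm_wrt counting beta (pmf_on_nat p) (pmf_on_nat q).
Proof.
rewrite /CMd (esum_pmf_on_nat2 (h := cm_integrand beta)) //.
  exact: cm_integrand_ge0.
exact: cm_integrandii.
Qed.

Lemma TVd_counting p q : TVd p q = tv_wrt counting (pmf_on_nat p) (pmf_on_nat q).
Proof.
by rewrite /TVd (esum_pmf_on_nat2 (h := fun a b => `|a - b|%R)) // subr0 normr0.
Qed.

Lemma esum_dist_counting (p q : T -> R) : \esum_(x in [set: T]) (`|p x - q x|)%:E =
  \int[counting]_n (`|pmf_on_nat p n - pmf_on_nat q n|)%:E.
Proof. by rewrite (esum_pmf_on_nat2 (h := fun a b => `|a - b|%R)) // subr0 normr0. Qed.

Lemma CMd_eq0 beta p q : is_pmf p -> is_pmf q -> CMd beta p q = 0 <-> p = q.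
Proof.
move=> [p0 _] [q0 _]; split; last first.
  by move=> <-; rewrite /CMd esum1 ?mule0 // => x _; rewrite cm_integrandii.
move=> /eqP; rewrite /CMd mule_eq0 eqe invr_eq0 pnatr_eq0 /= => /eqP cm0.
apply/funext => x; apply: (cm_integrand_eq0 (p0 x) (q0 x)); apply/eqP.
rewrite eq_le cm_integrand_ge0 andbT -lee_fin -[X in _ <= X]/(0 : \bar R) -cm0.
apply: esum_ge.
by exists [set x]; [split; [exact: finite_set1|]|rewrite fsbig_set1].
Qed.

End pmf_on_nat.

Local Open Scope ereal_scope.

Theorem mainTheorem10 (R : realType) :
  (forall p q f : R -> R, is_density p -> is_density q -> is_density f ->
    (forall beta : R, (0 < beta)%R ->
       (* (1) *)
       (0 <= CM beta p q /\
        (CM beta p q = 0 <-> {ae lebesgue_measure, forall x, p x = q x})) /\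
       (* (2) *)
       CM beta p q = CM beta q p /\
       (* (3) *)
       CM beta p q <= CM beta p f + CM beta f q /\
       (* (4) *)
       (0 <= CM beta p q /\ CM beta p q <= 1) /\
       (* (6) *)
       (forall pn qn : nat -> R -> R,
          (forall n, is_density (pn n)) -> (forall n, is_density (qn n)) ->
          (\int[lebesgue_measure]_x (`|pn n x - p x|)%:E) @[n --> \oo] --> 0 ->
          (\int[lebesgue_measure]_x (`|qn n x - q x|)%:E) @[n --> \oo] --> 0 ->
          CM beta (pn n) (qn n) @[n --> \oo] --> CM beta p q)) /\
    (* (5) *)
    CM b p q @[b --> (0:R)^'+] --> TV p q) /\
  (forall (T : countType) (p q f : T -> R), is_pmf p -> is_pmf q -> is_pmf f ->
    (forall beta : R, (0 < beta)%R ->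
       (0 <= CMd beta p q /\ (CMd beta p q = 0 <-> p = q)) /\
       CMd beta p q = CMd beta q p /\
       CMd beta p q <= CMd beta p f + CMd beta f q /\
       (0 <= CMd beta p q /\ CMd beta p q <= 1) /\
       (forall pn qn : nat -> T -> R,
          (forall n, is_pmf (pn n)) -> (forall n, is_pmf (qn n)) ->
          (\esum_(x in [set: T]) (`|pn n x - p x|)%:E) @[n --> \oo] --> 0 ->
          (\esum_(x in [set: T]) (`|qn n x - q x|)%:E) @[n --> \oo] --> 0 ->
          CMd beta (pn n) (qn n) @[n --> \oo] --> CMd beta p q)) /\
    CMd b p q @[b --> (0:R)^'+] --> TVd p q).
Proof.
split=> [p q f dp dq df|T p q f dp dq df].
  have [dp' dq' df'] : [/\ is_density_wrt lebesgue_measure p,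
    is_density_wrt lebesgue_measure q & is_density_wrt lebesgue_measure f] by [].
  split; last exact: cm_wrt_cvg_tv.
  move=> beta b0; do !split; try exact: cm_wrt_ge0.
  - exact: (cm_wrt_eq0 beta dp' dq').1.
  - exact: (cm_wrt_eq0 beta dp' dq').2.
  - exact: cm_wrtC.
  - exact: cm_wrt_triangle.
  - exact: cm_wrt_le1.
  - move=> pn qn dpn dqn; apply: (cvg_cm_wrt (mu := lebesgue_measure)) => //.
have [[dp' dq'] df'] := (pmf_on_nat_density dp, pmf_on_nat_density dq, pmf_on_nat_density df).
split=> [beta b0|]; last first.
  under eq_fun do rewrite CMd_counting.
  by rewrite TVd_counting; exact: cm_wrt_cvg_tv.
split; first by split; [rewrite CMd_counting; exact: cm_wrt_ge0|exact: CMd_eq0].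
rewrite !CMd_counting; do !split; try exact: cm_wrt_ge0.
- exact: cm_wrtC.
- exact: cm_wrt_triangle.
- exact: cm_wrt_le1.
move=> pn qn dpn dqn cvg_pn cvg_qn; under eq_fun do rewrite CMd_counting.
apply: cvg_cm_wrt => //; try by move=> n; exact: pmf_on_nat_density.
all: by under eq_fun do rewrite -esum_dist_counting.
Qed.
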